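(* Let $r=\frac{e^2-1}{e^2+1}$ and let $\mathcal{F}=\alpha_F+\beta_F$ be the Funk–Finsler metric on $\mathbb{D}_K(1)=\{x\in\mathbb{R}^2:|x|<r\}$. Define $$\phi=\frac{(1-r^2)\big[(1-|x|^2)|\xi|^2+2\langle x,\xi\rangle^2\big]}{(r^2-|x|^2)(1-|x|^2)^2},$$ $$\psi=\frac{2(1-r^2)\langle x,\xi\rangle}{(1-|x|^2)^3(r^2-|x|^2)^2}\Big[(1-|x|^2)|\xi|^2(3r^2-2|x|^2-1)-2\langle x,\xi\rangle^2(1+|x|^2-2r^2)\Big],$$ $$\tau_k=\frac{(1-r^2)\big(x^k|\xi|^2-\xi^k\langle x,\xi\rangle\big)}{\mathcal{F}(r^2-|x|^2)^2(1-|x|^2)}.$$ Then the Riemann curvature of $\mathcal{F}$ is $$R^i_k=-\big(\delta^i_k\alpha_F^2-\alpha_F(\alpha_F)_{\xi^k}\xi^i\big)+\Big[3\Big(\frac{\phi}{2\mathcal{F}}\Big)^2-\frac{\psi}{2\mathcal{F}}\Big]\Big(\delta^i_k-\frac{\mathcal{F}_{\xi^k}}{\mathcal{F}}\xi^i\Big)+\tau_k\xi^i,$$ and the Ricci curvature $\mathrm{Ric}=R^i_i$ and flag curvature $\mathbf{K}$ satisfy $$\mathrm{Ric}=\mathbf{K}\,\mathcal{F}^2=3\Big(\frac{\phi}{2\mathcal{F}}\Big)^2-\frac{\psi}{2\mathcal{F}}-\alpha_F^2.$$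
   Context: $\alpha_F(x,\xi)=\frac{\sqrt{(r^2-|x|^2)|\xi|^2+\langle x,\xi\rangle^2}}{r^2-|x|^2}$, $\beta_F(x,\xi)=\frac{(1-r^2)\langle x,\xi\rangle}{(r^2-|x|^2)(1-|x|^2)}$, $\mathcal{F}=\alpha_F+\beta_F$; subscripts $\xi^k$ denote partial derivatives in $\xi^k$. Spray coefficients: $G^i=\frac14g^{i\ell}\{[F^2]_{x^k\xi^\ell}\xi^k-[F^2]_{x^\ell}\}$ with $g_{ij}=\frac12\partial_{\xi^i}\partial_{\xi^j}F^2$. Riemann curvature: $R^i_k=2\frac{\partial G^i}{\partial x^k}-\xi^j\frac{\partial^2G^i}{\partial x^j\partial\xi^k}+2G^j\frac{\partial^2G^i}{\partial\xi^j\partial\xi^k}-\frac{\partial G^i}{\partial\xi^j}\frac{\partial G^j}{\partial\xi^k}$. Ricci curvature $\mathrm{Ric}=R^i_i$. The flag curvature $\mathbf{K}(x,\xi)$ of a 2-dimensional Finsler metric is the function with $\mathrm{Ric}=\mathbf{K}F^2$ (equivalently $\mathbf{K}=g_\xi(R_\xi u,u)/(g_\xi(\xi,\xi)g_\xi(u,u)-g_\xi(\xi,u)^2)$ for any $u$ not parallel to $\xi$). *)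

From Stdlib Require Import Reals.
From Coquelicot Require Import Coquelicot.
Open Scope R_scope.

(* A point of the tangent bundle T D: z 0 = x^1, z 1 = x^2, z 2 = xi^1, z 3 = xi^2
   (indices are 0-based: k in {0,1}). *)
Definition pt := nat -> R.

Definition upd (z : pt) (j : nat) (t : R) : pt :=
  fun m => if Nat.eqb m j then t else z m.

Definition pd (j : nat) (f : pt -> R) (z : pt) : R :=
  Derive (fun t => f (upd z j t)) (z j).

Definition xc (k : nat) (z : pt) : R := z k.
Definition yc (k : nat) (z : pt) : R := z (2 + k)%nat.

Definition sum2 (f : nat -> R) : R := f 0%nat + f 1%nat.
Definition delta (i k : nat) : R := if Nat.eqb i k then 1 else 0.

Definition rK : R := (exp 2 - 1) / (exp 2 + 1).

Definition nx2 (z : pt) : R := xc 0 z ^ 2 + xc 1 z ^ 2.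
Definition ny2 (z : pt) : R := yc 0 z ^ 2 + yc 1 z ^ 2.
Definition xy (z : pt) : R := xc 0 z * yc 0 z + xc 1 z * yc 1 z.

Definition alphaF (z : pt) : R :=
  sqrt ((rK ^ 2 - nx2 z) * ny2 z + xy z ^ 2) / (rK ^ 2 - nx2 z).
Definition betaF (z : pt) : R :=
  (1 - rK ^ 2) * xy z / ((rK ^ 2 - nx2 z) * (1 - nx2 z)).
Definition FF (z : pt) : R := alphaF z + betaF z.
Definition FF2 (z : pt) : R := FF z ^ 2.

Definition gF (i j : nat) (z : pt) : R := / 2 * pd (2 + i) (pd (2 + j) FF2) z.
Definition detg (z : pt) : R := gF 0 0 z * gF 1 1 z - gF 0 1 z * gF 1 0 z.
Definition ginv (i j : nat) (z : pt) : R :=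
  match i, j with
  | 0%nat, 0%nat => gF 1 1 z / detg z
  | 0%nat, _ => - gF 0 1 z / detg z
  | _, 0%nat => - gF 1 0 z / detg z
  | _, _ => gF 0 0 z / detg z
  end.

Definition Gsp (i : nat) (z : pt) : R :=
  / 4 * sum2 (fun l => ginv i l z *
     (sum2 (fun k => pd k (pd (2 + l) FF2) z * yc k z) - pd l FF2 z)).

Definition Riem (i k : nat) (z : pt) : R :=
  2 * pd k (Gsp i) z
  - sum2 (fun j => yc j z * pd j (pd (2 + k) (Gsp i)) z)
  + 2 * sum2 (fun j => Gsp j z * pd (2 + j) (pd (2 + k) (Gsp i)) z)
  - sum2 (fun j => pd (2 + j) (Gsp i) z * pd (2 + k) (Gsp j) z).

Definition Ric (z : pt) : R := sum2 (fun i => Riem i i z).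

(* flag curvature of the 2-dimensional metric: the function K with Ric = K F^2 *)
Definition flagK (z : pt) : R := Ric z / FF z ^ 2.

Definition phiF (z : pt) : R :=
  (1 - rK ^ 2) * ((1 - nx2 z) * ny2 z + 2 * xy z ^ 2)
  / ((rK ^ 2 - nx2 z) * (1 - nx2 z) ^ 2).

Definition psiF (z : pt) : R :=
  2 * (1 - rK ^ 2) * xy z / ((1 - nx2 z) ^ 3 * (rK ^ 2 - nx2 z) ^ 2)
  * ((1 - nx2 z) * ny2 z * (3 * rK ^ 2 - 2 * nx2 z - 1)
     - 2 * xy z ^ 2 * (1 + nx2 z - 2 * rK ^ 2)).

Definition tauF (k : nat) (z : pt) : R :=
  (1 - rK ^ 2) * (xc k z * ny2 z - yc k z * xy z)
  / (FF z * (rK ^ 2 - nx2 z) ^ 2 * (1 - nx2 z)).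

(* The metric depends on (x, xi) only through the invariants |x|^2, |xi|^2 and <x,xi>, so all its
   derivatives follow by the chain rule from derivatives with respect to these three quantities,
   and every identity needed becomes a rational identity in the invariants and sqrt Q, where
   Q = (r^2 - |x|^2) |xi|^2 + <x,xi>^2.
   F satisfies Hamel's equation xi^k F_{x^k xi^l} = F_{x^l} and xi^k F_{x^k} = 2 P F with
   P = <x,xi> / (r^2 - |x|^2) + phi / (2F); hence its spray is projective, G^i = P xi^i.  For a
   projective spray R^i_k = Xi delta^i_k + T_k xi^i with Xi = P^2 - P_{x^j} xi^j and
   T_k = 2 P_{x^k} - xi^j P_{x^j xi^k} - P P_{xi^k}; evaluating Xi and T_k gives the stated
   curvature, and the trace, via Euler's relation for F and alpha_F, gives Ric. *)

From Stdlib Require Import Reals Lra Lia FunctionalExtensionality.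
From Coquelicot Require Import Coquelicot.
Open Scope R_scope.

Definition is_pd (f : pt -> R) (d : nat) (w : pt) (l : R) : Prop :=
  is_derive (fun t => f (upd w d t)) (w d) l.

Lemma upd_id (w : pt) (d : nat) : upd w d (w d) = w.
Proof.
  apply functional_extensionality; intro m; unfold upd.
  destruct (Nat.eqb_spec m d); subst; reflexivity.
Qed.

Lemma is_pd_unique f d w l : is_pd f d w l -> pd d f w = l.
Proof. exact (is_derive_unique _ _ _). Qed.

Lemma is_pd_eq f d w l l' : is_pd f d w l -> l = l' -> is_pd f d w l'.
Proof. now intros H <-. Qed.

Lemma is_pd_const c d w : is_pd (fun _ => c) d w 0.
Proof. unfold is_pd; apply (is_derive_const c). Qed.

Lemma is_pd_plus f g d w a b :
  is_pd f d w a -> is_pd g d w b -> is_pd (fun v => f v + g v) d w (a + b).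
Proof. exact (is_derive_plus _ _ _ _ _). Qed.

Lemma is_pd_minus f g d w a b :
  is_pd f d w a -> is_pd g d w b -> is_pd (fun v => f v - g v) d w (a - b).
Proof. exact (is_derive_minus _ _ _ _ _). Qed.

Lemma is_pd_mult f g d w a b :
  is_pd f d w a -> is_pd g d w b -> is_pd (fun v => f v * g v) d w (a * g w + f w * b).
Proof.
  intros Hf Hg; pose proof (is_derive_mult _ _ _ _ _ Hf Hg Rmult_comm) as H.
  cbv beta in H; rewrite !upd_id in H; exact H.
Qed.

Lemma is_pd_div f g d w a b :
  is_pd f d w a -> is_pd g d w b -> g w <> 0 ->
  is_pd (fun v => f v / g v) d w ((a - f w / g w * b) / g w).
Proof.
  intros Hf Hg Hw; rewrite <- (upd_id w d) in Hw.
  pose proof (is_derive_div _ _ _ _ _ Hf Hg Hw) as H.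
  cbv beta in H; rewrite !upd_id in H, Hw.
  replace ((a - f w / g w * b) / g w) with ((a * g w - f w * b) / g w ^ 2) by (field; auto).
  exact H.
Qed.

Lemma is_pd_sqrt f d w a :
  is_pd f d w a -> 0 < f w -> is_pd (fun v => sqrt (f v)) d w (a / (2 * sqrt (f w))).
Proof.
  intros Hf Hw; rewrite <- (upd_id w d) in Hw.
  pose proof (is_derive_sqrt _ _ _ Hf Hw) as H.
  cbv beta in H; rewrite !upd_id in H; exact H.
Qed.

Lemma is_pd_ext_pt f g d w l : (forall v, f v = g v) -> is_pd g d w l -> is_pd f d w l.
Proof.
  intros E; apply is_derive_ext; intro t; now rewrite E.
Qed.

Lemma is_pd_locally_pos f d w l :
  is_pd f d w l -> 0 < f w -> locally (w d) (fun t => 0 < f (upd w d t)).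
Proof.
  intros H Hp.
  assert (Hc : continuity_pt (fun t => f (upd w d t)) (w d)).
  { apply continuity_pt_filterlim, (ex_derive_continuous (fun t => f (upd w d t))).
    now exists l. }
  rewrite continuity_pt_locally in Hc; specialize (Hc (mkposreal _ Hp)); simpl in Hc.
  rewrite upd_id in Hc; eapply filter_imp; [|exact Hc].
  intros t Ht; apply Rabs_lt_between in Ht; lra.
Qed.

Definition coord_open (U : pt -> Prop) : Prop :=
  forall w d, U w -> locally (w d) (fun t => U (upd w d t)).

Lemma is_pd_ext_on U f g d w l :
  coord_open U -> (forall v, U v -> f v = g v) -> U w -> is_pd g d w l -> is_pd f d w l.
Proof.
  intros HU E Hw; apply is_derive_ext_loc.
  eapply filter_imp; [|exact (HU w d Hw)]; intros t Ht; now rewrite E.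
Qed.

(** * Functions of the invariants *)

Inductive invariant : Set := Nx | Ny | Nxy.

Definition inv (a : invariant) (v : pt) : R :=
  match a with Nx => nx2 v | Ny => ny2 v | Nxy => xy v end.

Definition dinv (a : invariant) (v : pt) (d : nat) : R :=
  match a with
  | Nx => 2 * (v 0%nat * delta d 0 + v 1%nat * delta d 1)
  | Ny => 2 * (v 2%nat * delta d 2 + v 3%nat * delta d 3)
  | Nxy => v 2%nat * delta d 0 + v 3%nat * delta d 1 + v 0%nat * delta d 2 + v 1%nat * delta d 3
  end.

Definition ddinv (a : invariant) (d d' : nat) : R :=
  match a with
  | Nx => 2 * (delta d 0 * delta d' 0 + delta d 1 * delta d' 1)
  | Ny => 2 * (delta d 2 * delta d' 2 + delta d 3 * delta d' 3)
  | Nxy => delta d 0 * delta d' 2 + delta d 1 * delta d' 3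
           + delta d' 0 * delta d 2 + delta d' 1 * delta d 3
  end.

Definition sum_inv (f : invariant -> R) : R := f Nx + f Ny + f Nxy.

Lemma is_pd_coord j d w : is_pd (fun v => v j) d w (delta d j).
Proof.
  unfold is_pd, upd, delta; destruct (Nat.eqb_spec j d) as [->|ne].
  - rewrite Nat.eqb_refl; apply (is_derive_id (w d)).
  - replace (Nat.eqb d j) with false by (symmetry; apply Nat.eqb_neq; congruence).
    apply (is_derive_const (w j)).
Qed.

Ltac is_pd_rec :=
  match goal with
  | |- is_pd (fun _ => ?c) _ _ _ => apply is_pd_const
  | |- is_pd (fun v => v ?j) _ _ _ => apply is_pd_coord
  | |- is_pd (fun v => @?a v + @?b v) _ _ _ => apply (is_pd_plus a b); is_pd_rec
  | |- is_pd (fun v => @?a v - @?b v) _ _ _ => apply (is_pd_minus a b); is_pd_rec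
  | |- is_pd (fun v => @?a v * @?b v) _ _ _ => apply (is_pd_mult a b); is_pd_rec
  | |- is_pd (fun v => @?a v ^ 2) _ _ _ =>
      apply (is_pd_ext_pt _ (fun v => a v * a v)); [intro; cbv beta; ring|];
      apply (is_pd_mult a a); is_pd_rec
  | _ => idtac
  end.

Ltac is_pd_poly := eapply is_pd_eq; [is_pd_rec|].

Lemma is_pd_inv a d w : is_pd (inv a) d w (dinv a w d).
Proof.
  destruct a; unfold inv, nx2, ny2, xy, xc, yc; cbn [Nat.add]; is_pd_poly;
    unfold dinv; ring.
Qed.

Lemma is_pd_dinv a d d' w : is_pd (fun v => dinv a v d) d' w (ddinv a d d').
Proof. destruct a; unfold dinv; is_pd_poly; unfold ddinv; ring. Qed.

Inductive iexpr : Type :=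
  | ECst (c : R)
  | EInv (a : invariant)
  | EAdd (e1 e2 : iexpr)
  | ESub (e1 e2 : iexpr)
  | EMul (e1 e2 : iexpr)
  | EDiv (e1 e2 : iexpr)
  | ESqrt (e : iexpr).

Fixpoint ev (e : iexpr) (v : pt) : R :=
  match e with
  | ECst c => c
  | EInv a => inv a v
  | EAdd e1 e2 => ev e1 v + ev e2 v
  | ESub e1 e2 => ev e1 v - ev e2 v
  | EMul e1 e2 => ev e1 v * ev e2 v
  | EDiv e1 e2 => ev e1 v / ev e2 v
  | ESqrt e1 => sqrt (ev e1 v)
  end.

Fixpoint defined_at (e : iexpr) (v : pt) : Prop :=
  match e with
  | ECst _ | EInv _ => True
  | EAdd e1 e2 | ESub e1 e2 | EMul e1 e2 => defined_at e1 v /\ defined_at e2 v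
  | EDiv e1 e2 => defined_at e1 v /\ defined_at e2 v /\ ev e2 v <> 0
  | ESqrt e1 => defined_at e1 v /\ 0 < ev e1 v
  end.

Definition inv_eqb (a b : invariant) : bool :=
  match a, b with
  | Nx, Nx | Ny, Ny | Nxy, Nxy => true
  | _, _ => false
  end.

(* The quotient rule is written as (f' - (f/g) g') / g so that no new denominator appears. *)
Fixpoint deriv (e : iexpr) (a : invariant) : iexpr :=
  match e with
  | ECst _ => ECst 0
  | EInv b => ECst (if inv_eqb a b then 1 else 0)
  | EAdd e1 e2 => EAdd (deriv e1 a) (deriv e2 a)
  | ESub e1 e2 => ESub (deriv e1 a) (deriv e2 a)
  | EMul e1 e2 => EAdd (EMul (deriv e1 a) e2) (EMul e1 (deriv e2 a))
  | EDiv e1 e2 => EDiv (ESub (deriv e1 a) (EMul (EDiv e1 e2) (deriv e2 a))) e2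
  | ESqrt e1 => EDiv (deriv e1 a) (EMul (ECst 2) (ESqrt e1))
  end.

Definition pd_expr (e : iexpr) (v : pt) (d : nat) : R :=
  sum_inv (fun a => ev (deriv e a) v * dinv a v d).

Definition pd2_expr (e : iexpr) (v : pt) (d d' : nat) : R :=
  sum_inv (fun a => pd_expr (deriv e a) v d' * dinv a v d + ev (deriv e a) v * ddinv a d d').

Lemma defined_at_deriv e a w : defined_at e w -> defined_at (deriv e a) w.
Proof.
  induction e; cbn -[sqrt]; try tauto.
  intros [He Hpos]; repeat split; auto.
  pose proof (sqrt_lt_R0 _ Hpos); lra.
Qed.

Lemma is_pd_ev e d w : defined_at e w -> is_pd (ev e) d w (pd_expr e w d).
Proof.
  unfold pd_expr, sum_inv; induction e; cbn [defined_at deriv ev]; intros Hd.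
  - eapply is_pd_eq; [apply is_pd_const|ring].
  - eapply is_pd_eq; [apply is_pd_inv|destruct a; cbn; ring].
  - eapply is_pd_eq; [apply (is_pd_plus (ev e1) (ev e2)); [apply IHe1|apply IHe2]; tauto|ring].
  - eapply is_pd_eq; [apply (is_pd_minus (ev e1) (ev e2)); [apply IHe1|apply IHe2]; tauto|ring].
  - eapply is_pd_eq; [apply (is_pd_mult (ev e1) (ev e2)); [apply IHe1|apply IHe2]; tauto|ring].
  - eapply is_pd_eq;
      [apply (is_pd_div (ev e1) (ev e2)); [apply IHe1|apply IHe2|]; tauto|unfold Rdiv; ring].
  - eapply is_pd_eq; [apply (is_pd_sqrt (ev e)); [apply IHe|]; tauto|unfold Rdiv; ring].
Qed.

Lemma deriv_comm e a b w :
  defined_at e w -> ev (deriv (deriv e a) b) w = ev (deriv (deriv e b) a) w.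
Proof.
  induction e; cbn [defined_at deriv ev]; intros Hd; try reflexivity.
  - rewrite IHe1, IHe2 by tauto; reflexivity.
  - rewrite IHe1, IHe2 by tauto; reflexivity.
  - rewrite IHe1, IHe2 by tauto; ring.
  - destruct Hd as (H1 & H2 & H0); rewrite IHe1, IHe2 by tauto; field; auto.
  - destruct Hd as [H1 H0]; rewrite IHe by tauto.
    pose proof (sqrt_lt_R0 _ H0); field; lra.
Qed.

Lemma is_pd_pd_expr e d d' w :
  defined_at e w -> is_pd (fun v => pd_expr e v d) d' w (pd2_expr e w d d').
Proof.
  intros Hd; unfold pd2_expr, pd_expr at 1, sum_inv.
  assert (Ha : forall a, is_pd (fun v => ev (deriv e a) v * dinv a v d) d' w
                 (pd_expr (deriv e a) w d' * dinv a w d + ev (deriv e a) w * ddinv a d d')).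
  { intro a; apply (is_pd_mult (ev (deriv e a)) (fun v => dinv a v d)).
    - apply is_pd_ev, defined_at_deriv, Hd.
    - apply is_pd_dinv. }
  apply is_pd_plus; [apply is_pd_plus|]; apply Ha.
Qed.

Lemma pd2_expr_comm e w d d' : defined_at e w -> pd2_expr e w d d' = pd2_expr e w d' d.
Proof.
  intros Hd; unfold pd2_expr, pd_expr, sum_inv.
  rewrite (deriv_comm e Ny Nx), (deriv_comm e Nxy Nx), (deriv_comm e Nxy Ny) by exact Hd.
  unfold ddinv; ring.
Qed.

Lemma pd_expr_sq e v d : pd_expr (EMul e e) v d = 2 * ev e v * pd_expr e v d.
Proof. unfold pd_expr, sum_inv; cbn [deriv ev]; ring. Qed.

Lemma pd2_expr_sq e v d d' :
  pd2_expr (EMul e e) v d d' = 2 * (pd_expr e v d' * pd_expr e v d + ev e v * pd2_expr e v d d').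
Proof. unfold pd2_expr, pd_expr, sum_inv; cbn [deriv ev]; ring. Qed.

Section Represented.
Variable U : pt -> Prop.
Hypothesis HU : coord_open U.
Variable f : pt -> R.
Variable e : iexpr.
Hypothesis Hdef : forall v, U v -> defined_at e v.
Hypothesis Hf : forall v, U v -> f v = ev e v.

Lemma is_pd_represented d w : U w -> is_pd f d w (pd_expr e w d).
Proof. intro Hw; apply (is_pd_ext_on U f (ev e)); auto; apply is_pd_ev; auto. Qed.

Lemma pd_represented d w : U w -> pd d f w = pd_expr e w d.
Proof. intro Hw; apply is_pd_unique, is_pd_represented, Hw. Qed.

Lemma pd2_represented d d' w : U w -> pd d' (pd d f) w = pd2_expr e w d d'.
Proof.
  intro Hw; apply is_pd_unique.
  apply (is_pd_ext_on U _ (fun v => pd_expr e v d)); auto.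
  - intros v Hv; apply pd_represented, Hv.
  - apply is_pd_pd_expr; auto.
Qed.

End Represented.

Definition y_dot_dx (e : iexpr) (v : pt) : R :=
  2 * xy v * ev (deriv e Nx) v + ny2 v * ev (deriv e Nxy) v.

Definition y_dot_dy (e : iexpr) (v : pt) : R :=
  2 * ny2 v * ev (deriv e Ny) v + xy v * ev (deriv e Nxy) v.

Ltac coord_ring :=
  unfold y_dot_dx, y_dot_dy, pd2_expr, pd_expr, sum_inv, sum2, dinv, ddinv, nx2, ny2, xy, xc, yc;
  cbv [delta Nat.eqb Nat.add]; ring.

Section Decomposition.
Variables (e : iexpr) (w : pt) (k : nat).
Hypothesis Hk : (k < 2)%nat.

Lemma pd_expr_x : pd_expr e w k = 2 * xc k w * ev (deriv e Nx) w + yc k w * ev (deriv e Nxy) w.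
Proof. destruct k as [|[|]]; [| |lia]; coord_ring. Qed.

Lemma pd_expr_y :
  pd_expr e w (2 + k) = 2 * yc k w * ev (deriv e Ny) w + xc k w * ev (deriv e Nxy) w.
Proof. destruct k as [|[|]]; [| |lia]; coord_ring. Qed.

Lemma sum_y_pd2_expr_x :
  sum2 (fun j => yc j w * pd2_expr e w (2 + k) j)
  = xc k w * y_dot_dx (deriv e Nxy) w
    + yc k w * (2 * y_dot_dx (deriv e Ny) w + ev (deriv e Nxy) w).
Proof. destruct k as [|[|]]; [| |lia]; coord_ring. Qed.

Lemma sum_y_pd2_expr_y :
  sum2 (fun j => yc j w * pd2_expr e w (2 + k) (2 + j))
  = xc k w * y_dot_dy (deriv e Nxy) w
    + 2 * yc k w * (y_dot_dy (deriv e Ny) w + ev (deriv e Ny) w).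
Proof. destruct k as [|[|]]; [| |lia]; coord_ring. Qed.

End Decomposition.

Lemma sum_y_pd_expr_x e w : sum2 (fun j => yc j w * pd_expr e w j) = y_dot_dx e w.
Proof. coord_ring. Qed.

Lemma sum_y_pd_expr_y e w : sum2 (fun j => yc j w * pd_expr e w (2 + j)) = y_dot_dy e w.
Proof. coord_ring. Qed.

(** * Projective sprays *)

Lemma ginv_solve (z : pt) (u : nat -> R) (i : nat) :
  (i < 2)%nat -> detg z <> 0 ->
  sum2 (fun l => ginv i l z * sum2 (fun j => gF l j z * u j)) = u i.
Proof.
  intros Hi Hdet; unfold detg in Hdet; unfold sum2, ginv, detg.
  destruct i as [|[|]]; [| |lia]; field; exact Hdet.
Qed.

Section ProjectiveSpray.
Variable U : pt -> Prop.
Hypothesis HU : coord_open U.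
Variables (P : pt -> R) (dP : pt -> nat -> R) (ddP : pt -> nat -> nat -> R).
Hypothesis HG : forall i v, (i < 2)%nat -> U v -> Gsp i v = P v * yc i v.
Hypothesis HdP : forall d v, U v -> is_pd P d v (dP v d).
Hypothesis HddP : forall d d' v, U v -> is_pd (fun v => dP v d) d' v (ddP v d d').

Lemma is_pd_Gsp i d v :
  (i < 2)%nat -> U v -> is_pd (Gsp i) d v (dP v d * yc i v + P v * delta d (2 + i)).
Proof.
  intros Hi Hv; apply (is_pd_ext_on U _ (fun v => P v * v (2 + i)%nat)); auto.
  apply (is_pd_mult P (fun v => v (2 + i)%nat)); auto; apply is_pd_coord.
Qed.

Lemma pd2_Gsp i d d' v :
  (i < 2)%nat -> U v ->
  pd d' (pd d (Gsp i)) v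
  = ddP v d d' * yc i v + dP v d * delta d' (2 + i) + dP v d' * delta d (2 + i).
Proof.
  intros Hi Hv; apply is_pd_unique.
  apply (is_pd_ext_on U _ (fun v => dP v d * v (2 + i)%nat + P v * delta d (2 + i))); auto.
  - intros u Hu; apply is_pd_unique, is_pd_Gsp; auto.
  - eapply is_pd_eq.
    + apply is_pd_plus; [apply (is_pd_mult (fun v => dP v d) (fun v => v (2 + i)%nat))
                        |apply (is_pd_mult P (fun _ => delta d (2 + i)))];
        auto using is_pd_coord, is_pd_const.
    + unfold yc; ring.
Qed.

Lemma Riem_projective z i k :
  U z -> (i < 2)%nat -> (k < 2)%nat ->
  sum2 (fun j => yc j z * dP z (2 + j)) = P z ->
  sum2 (fun j => yc j z * ddP z (2 + k) (2 + j)) = 0 ->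
  Riem i k z
  = (P z ^ 2 - sum2 (fun j => yc j z * dP z j)) * delta i k
    + (2 * dP z k - sum2 (fun j => yc j z * ddP z (2 + k) j) - P z * dP z (2 + k)) * yc i z.
Proof.
  intros Hz Hi Hk Euler1 Euler2.
  assert (H0 : (0 < 2)%nat) by lia; assert (H1 : (1 < 2)%nat) by lia.
  unfold Riem, sum2.
  rewrite !pd2_Gsp, !(is_pd_unique _ _ _ _ (is_pd_Gsp _ _ _ Hi Hz)),
    !(is_pd_unique _ _ _ _ (is_pd_Gsp _ _ _ H0 Hz)),
    !(is_pd_unique _ _ _ _ (is_pd_Gsp _ _ _ H1 Hz)), !HG by auto.
  apply Rminus_diag_uniq.
  transitivity ((2 * P z * delta i k - yc i z * dP z (2 + k))
                  * (sum2 (fun j => yc j z * dP z (2 + j)) - P z)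
                + 2 * P z * yc i z * sum2 (fun j => yc j z * ddP z (2 + k) (2 + j))).
  - unfold sum2, yc; destruct i as [|[|]], k as [|[|]]; try lia;
      cbv [delta Nat.eqb Nat.add]; ring.
  - rewrite Euler1, Euler2; ring.
Qed.

End ProjectiveSpray.

(** * The Funk-Finsler metric *)

Lemma rK2_bounds : 0 < rK ^ 2 < 1.
Proof.
  assert (He : 1 < exp 2) by (rewrite <- exp_0; apply exp_increasing; lra).
  assert (Hr : 0 < rK < 1).
  { unfold rK; split.
    - apply Rdiv_lt_0_compat; lra.
    - apply Rmult_lt_reg_r with (exp 2 + 1); [lra|].
      unfold Rdiv; rewrite Rmult_assoc, Rinv_l; lra. }
  split; nra.
Qed.

Definition funk_domain (v : pt) : Prop := nx2 v < rK ^ 2 /\ 0 < ny2 v.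

Definition eA : iexpr := ESub (ECst (rK ^ 2)) (EInv Nx).
Definition eB : iexpr := ESub (ECst 1) (EInv Nx).
Definition eQ : iexpr := EAdd (EMul eA (EInv Ny)) (EMul (EInv Nxy) (EInv Nxy)).
Definition alphaE : iexpr := EDiv (ESqrt eQ) eA.
Definition betaE : iexpr := EDiv (EMul (ECst (1 - rK ^ 2)) (EInv Nxy)) (EMul eA eB).
Definition FE : iexpr := EAdd alphaE betaE.
Definition phiE : iexpr :=
  EDiv (EMul (ECst (1 - rK ^ 2))
             (EAdd (EMul eB (EInv Ny)) (EMul (ECst 2) (EMul (EInv Nxy) (EInv Nxy)))))
       (EMul eA (EMul eB eB)).
Definition PE : iexpr := EAdd (EDiv (EInv Nxy) eA) (EDiv phiE (EMul (ECst 2) FE)).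

Ltac expand_funk :=
  cbv [ev deriv inv inv_eqb y_dot_dx y_dot_dy PE phiE FE alphaE betaE eQ eA eB phiF psiF] in *.

Section Positivity.
Variable w : pt.
Hypothesis Hw : funk_domain w.

Lemma funk_Q_pos : 0 < (rK ^ 2 - nx2 w) * ny2 w + xy w * xy w.
Proof. destruct Hw; nra. Qed.

Lemma funk_F_num_pos :
  0 < (1 - nx2 w) * sqrt ((rK ^ 2 - nx2 w) * ny2 w + xy w * xy w) + (1 - rK ^ 2) * xy w.
Proof.
  pose proof rK2_bounds; pose proof funk_Q_pos as HQ; destruct Hw as [Hn Hm].
  set (s := sqrt _).
  assert (Hs2 : s * s = (rK ^ 2 - nx2 w) * ny2 w + xy w * xy w) by (apply sqrt_sqrt; lra).
  assert (Hs : 0 < s) by (apply sqrt_lt_R0, HQ).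
  assert (Hps : xy w < s /\ - xy w < s) by (split; nra).
  destruct (Rle_or_lt 0 (xy w)); nra.
Qed.

End Positivity.

Ltac side_conditions :=
  repeat split;
  first [apply Rgt_not_eq; lra | apply Rlt_not_eq; lra
        | apply Rgt_not_eq; nra | apply Rlt_not_eq; nra | idtac].

(* |xi|^2 is eliminated through sqrt Q * sqrt Q = Q, leaving a rational identity in
   r^2, |x|^2, <x,xi> and sqrt Q. *)
Ltac funk_field w Hw :=
  pose proof rK2_bounds; pose proof (funk_Q_pos w Hw) as HQ; pose proof (funk_F_num_pos w Hw);
  destruct Hw as [? ?];
  expand_funk;
  assert (0 < sqrt ((rK ^ 2 - nx2 w) * ny2 w + xy w * xy w)) by (apply sqrt_lt_R0, HQ);
  assert (sqrt ((rK ^ 2 - nx2 w) * ny2 w + xy w * xy w)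
          * sqrt ((rK ^ 2 - nx2 w) * ny2 w + xy w * xy w)
          = (rK ^ 2 - nx2 w) * ny2 w + xy w * xy w) by (apply sqrt_sqrt; lra);
  set (s := sqrt ((rK ^ 2 - nx2 w) * ny2 w + xy w * xy w)) in *;
  set (r := rK ^ 2) in *; set (n := nx2 w) in *; set (m := ny2 w) in *; set (p := xy w) in *;
  clearbody s r n m p;
  assert (m = (s * s - p * p) / (r - n)) by (field_simplify_eq; [lra|lra]);
  subst m; field; side_conditions.

Section Identities.
Variable w : pt.
Hypothesis Hw : funk_domain w.

Lemma FE_euler : y_dot_dy FE w = ev FE w.
Proof. funk_field w Hw. Qed.

Lemma FE_Ny_euler : y_dot_dy (deriv FE Ny) w = - ev (deriv FE Ny) w.
Proof. funk_field w Hw. Qed.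

Lemma FE_Nxy_euler : y_dot_dy (deriv FE Nxy) w = 0.
Proof. funk_field w Hw. Qed.

(* Hamel's equation xi^k F_{x^k xi^l} = F_{x^l}, in the invariants. *)
Lemma FE_Ny_hamel : y_dot_dx (deriv FE Ny) w = 0.
Proof. funk_field w Hw. Qed.

Lemma FE_Nxy_hamel : y_dot_dx (deriv FE Nxy) w = 2 * ev (deriv FE Nx) w.
Proof. funk_field w Hw. Qed.

Lemma FE_spray : y_dot_dx FE w = 2 * ev PE w * ev FE w.
Proof. funk_field w Hw. Qed.

Lemma PE_euler : y_dot_dy PE w = ev PE w.
Proof. funk_field w Hw. Qed.

Lemma PE_Ny_euler : y_dot_dy (deriv PE Ny) w = - ev (deriv PE Ny) w.
Proof. funk_field w Hw. Qed.

Lemma PE_Nxy_euler : y_dot_dy (deriv PE Nxy) w = 0.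
Proof. funk_field w Hw. Qed.

Lemma alphaE_euler : y_dot_dy alphaE w = ev alphaE w.
Proof. funk_field w Hw. Qed.

Lemma PE_Xi :
  ev PE w ^ 2 - y_dot_dx PE w
  = 3 * (phiF w / (2 * ev FE w)) ^ 2 - psiF w / (2 * ev FE w) - ev alphaE w ^ 2.
Proof. funk_field w Hw. Qed.

(* The x_k- and xi_k-components of T_k. *)
Lemma PE_T_dx :
  4 * ev (deriv PE Nx) w - y_dot_dx (deriv PE Nxy) w - ev PE w * ev (deriv PE Nxy) w
  = ev alphaE w * ev (deriv alphaE Nxy) w
    - (3 * (phiF w / (2 * ev FE w)) ^ 2 - psiF w / (2 * ev FE w)) * ev (deriv FE Nxy) w / ev FE w
    + (1 - rK ^ 2) * ny2 w / (ev FE w * (rK ^ 2 - nx2 w) ^ 2 * (1 - nx2 w)).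
Proof. funk_field w Hw. Qed.

Lemma PE_T_dy :
  ev (deriv PE Nxy) w - 2 * y_dot_dx (deriv PE Ny) w - 2 * ev PE w * ev (deriv PE Ny) w
  = 2 * ev alphaE w * ev (deriv alphaE Ny) w
    - 2 * (3 * (phiF w / (2 * ev FE w)) ^ 2 - psiF w / (2 * ev FE w)) * ev (deriv FE Ny) w / ev FE w
    - (1 - rK ^ 2) * xy w / (ev FE w * (rK ^ 2 - nx2 w) ^ 2 * (1 - nx2 w)).
Proof. funk_field w Hw. Qed.

End Identities.

Section Metric.

Lemma alphaF_ev v : alphaF v = ev alphaE v.
Proof.
  unfold alphaF; cbv [ev alphaE eQ eA inv].
  replace (xy v ^ 2) with (xy v * xy v) by ring; reflexivity.
Qed.

Lemma FF_ev v : FF v = ev FE v.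
Proof. unfold FF; rewrite alphaF_ev; reflexivity. Qed.

Lemma FF2_ev v : FF2 v = ev (EMul FE FE) v.
Proof. unfold FF2; rewrite FF_ev; cbn [ev]; ring. Qed.

Variable w : pt.
Hypothesis Hw : funk_domain w.

Lemma FE_pos : 0 < ev FE w.
Proof.
  pose proof rK2_bounds; pose proof (funk_F_num_pos w Hw); destruct Hw.
  replace (ev FE w) with
    (((1 - nx2 w) * sqrt ((rK ^ 2 - nx2 w) * ny2 w + xy w * xy w) + (1 - rK ^ 2) * xy w)
     / ((rK ^ 2 - nx2 w) * (1 - nx2 w)))
    by (cbv [ev FE alphaE betaE eQ eA eB inv]; field; split; lra).
  apply Rdiv_lt_0_compat; [lra|apply Rmult_lt_0_compat; lra].
Qed.

Lemma funk_defined : defined_at FE w /\ defined_at alphaE w /\ defined_at PE w.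
Proof.
  pose proof rK2_bounds; pose proof (funk_Q_pos w Hw); pose proof FE_pos as HF.
  destruct Hw; cbn [defined_at ev inv PE phiE FE alphaE betaE eQ eA eB] in *.
  repeat split; try lra; apply Rgt_not_eq, Rmult_lt_0_compat; nra.
Qed.

End Metric.

Lemma defined_FE v : funk_domain v -> defined_at FE v.
Proof. intro Hv; apply (funk_defined v Hv). Qed.

Lemma defined_alphaE v : funk_domain v -> defined_at alphaE v.
Proof. intro Hv; apply (funk_defined v Hv). Qed.

Lemma defined_PE v : funk_domain v -> defined_at PE v.
Proof. intro Hv; apply (funk_defined v Hv). Qed.

Lemma funk_domain_open : coord_open funk_domain.
Proof.
  intros w d [Hn Hm].
  assert (LA : locally (w d) (fun t => 0 < ev eA (upd w d t)))
    by (apply (is_pd_locally_pos _ d w (pd_expr eA w d)); [apply is_pd_ev|cbn]; cbn; lra).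
  assert (LM : locally (w d) (fun t => 0 < ev (EInv Ny) (upd w d t)))
    by (apply (is_pd_locally_pos _ d w (pd_expr (EInv Ny) w d)); [apply is_pd_ev|]; cbn; auto).
  eapply filter_imp; [|exact (filter_and _ _ LA LM)].
  intros t; cbn; unfold funk_domain; lra.
Qed.

Section FunkDerivatives.
Variable w : pt.
Hypothesis Hw : funk_domain w.

Lemma pd_FF d : pd d FF w = pd_expr FE w d.
Proof.
  apply (pd_represented funk_domain funk_domain_open FF FE defined_FE); auto.
  intros; apply FF_ev.
Qed.

Lemma pd_alphaF d : pd d alphaF w = pd_expr alphaE w d.
Proof.
  apply (pd_represented funk_domain funk_domain_open alphaF alphaE defined_alphaE); auto.
  intros; apply alphaF_ev.
Qed.

Lemma defined_FE_sq v : funk_domain v -> defined_at (EMul FE FE) v.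
Proof. intro Hv; split; apply defined_FE, Hv. Qed.

Lemma pd_FF2 d : pd d FF2 w = 2 * ev FE w * pd_expr FE w d.
Proof.
  rewrite (pd_represented funk_domain funk_domain_open FF2 (EMul FE FE) defined_FE_sq),
    pd_expr_sq; auto.
  intros; apply FF2_ev.
Qed.

Lemma pd2_FF2 d d' :
  pd d' (pd d FF2) w = 2 * (pd_expr FE w d' * pd_expr FE w d + ev FE w * pd2_expr FE w d d').
Proof.
  rewrite (pd2_represented funk_domain funk_domain_open FF2 (EMul FE FE) defined_FE_sq),
    pd2_expr_sq; auto.
  intros; apply FF2_ev.
Qed.

Lemma gF_funk i j :
  gF i j w = pd_expr FE w (2 + i) * pd_expr FE w (2 + j) + ev FE w * pd2_expr FE w (2 + j) (2 + i).
Proof. unfold gF; rewrite pd2_FF2; field. Qed.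

Lemma sum_gF_y l :
  (l < 2)%nat -> sum2 (fun j => gF l j w * yc j w) = ev FE w * pd_expr FE w (2 + l).
Proof.
  intro Hl.
  transitivity (pd_expr FE w (2 + l) * sum2 (fun j => yc j w * pd_expr FE w (2 + j))
                + ev FE w * sum2 (fun j => yc j w * pd2_expr FE w (2 + l) (2 + j))).
  - unfold sum2; rewrite !gF_funk, (pd2_expr_comm FE w (2 + 0)), (pd2_expr_comm FE w (2 + 1))
      by (apply defined_FE, Hw); ring.
  - rewrite sum_y_pd_expr_y, sum_y_pd2_expr_y, FE_euler, FE_Ny_euler, FE_Nxy_euler by auto; ring.
Qed.

Lemma sum_pd2_FF2_y l :
  (l < 2)%nat ->
  sum2 (fun k => pd k (pd (2 + l) FF2) w * yc k w) - pd l FF2 w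
  = 4 * ev PE w * (ev FE w * pd_expr FE w (2 + l)).
Proof.
  intro Hl.
  transitivity
    (2 * (y_dot_dx FE w * pd_expr FE w (2 + l)
          + ev FE w * (sum2 (fun k => yc k w * pd2_expr FE w (2 + l) k) - pd_expr FE w l))).
  - rewrite <- (sum_y_pd_expr_x FE w); unfold sum2; rewrite !pd2_FF2, pd_FF2; ring.
  - rewrite sum_y_pd2_expr_x, (pd_expr_x FE w l), FE_spray, FE_Ny_hamel, FE_Nxy_hamel by auto; ring.
Qed.

(* g_ij = d delta_ij + (V M V^T)_ij with V = (x | xi), so
   det g = d^2 + d tr (M V^T V) + det M det (V^T V). *)
Lemma detg_funk : detg w = ev FE w ^ 3 * rK ^ 2 / ev (ESqrt eQ) w ^ 3.
Proof.
  transitivity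
    (let F := ev FE w in
     let Fm := ev (deriv FE Ny) w in
     let Fp := ev (deriv FE Nxy) w in
     let a := Fp ^ 2 + F * ev (deriv (deriv FE Nxy) Nxy) w in
     let b := 2 * Fp * Fm + 2 * F * ev (deriv (deriv FE Ny) Nxy) w in
     let b' := 2 * Fm * Fp + 2 * F * ev (deriv (deriv FE Nxy) Ny) w in
     let c := 4 * Fm ^ 2 + 4 * F * ev (deriv (deriv FE Ny) Ny) w in
     let d := 2 * F * Fm in
     d ^ 2 + d * (a * nx2 w + (b + b') * xy w + c * ny2 w)
     + (a * c - b * b') * (nx2 w * ny2 w - xy w ^ 2)).
  - unfold detg; rewrite !gF_funk; cbv zeta; coord_ring.
  - cbv zeta; funk_field w Hw.
Qed.

Lemma detg_funk_neq0 : detg w <> 0.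
Proof.
  pose proof rK2_bounds; pose proof (FE_pos w Hw).
  assert (0 < ev (ESqrt eQ) w) by (apply sqrt_lt_R0, funk_Q_pos, Hw).
  rewrite detg_funk; apply Rgt_not_eq, Rdiv_lt_0_compat.
  - apply Rmult_lt_0_compat; [apply pow_lt|]; lra.
  - apply pow_lt; lra.
Qed.

End FunkDerivatives.

Lemma Gsp_funk i w : (i < 2)%nat -> funk_domain w -> Gsp i w = ev PE w * yc i w.
Proof.
  intros Hi Hw; unfold Gsp.
  transitivity
    (/ 4 * sum2 (fun l => ginv i l w * sum2 (fun j => gF l j w * (4 * ev PE w * yc j w)))).
  - unfold sum2 at 1 3.
    rewrite (sum_pd2_FF2_y w Hw 0), (sum_pd2_FF2_y w Hw 1), <- (sum_gF_y w Hw 0),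
      <- (sum_gF_y w Hw 1) by lia.
    unfold sum2; ring.
  - rewrite ginv_solve by auto using detg_funk_neq0; field.
Qed.

Section FunkCurvature.
Variable z : pt.
Hypothesis Hz : funk_domain z.

Lemma Riem_funk_projective i k :
  (i < 2)%nat -> (k < 2)%nat ->
  Riem i k z
  = (ev PE z ^ 2 - sum2 (fun j => yc j z * pd_expr PE z j)) * delta i k
    + (2 * pd_expr PE z k - sum2 (fun j => yc j z * pd2_expr PE z (2 + k) j)
       - ev PE z * pd_expr PE z (2 + k)) * yc i z.
Proof.
  intros Hi Hk.
  apply (Riem_projective funk_domain funk_domain_open (ev PE) (pd_expr PE) (pd2_expr PE)); auto.
  - intros; apply Gsp_funk; auto.
  - intros; apply is_pd_ev, defined_PE; auto.
  - intros; apply is_pd_pd_expr, defined_PE; auto.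
  - rewrite sum_y_pd_expr_y; apply PE_euler, Hz.
  - rewrite sum_y_pd2_expr_y, PE_Ny_euler, PE_Nxy_euler by auto; ring.
Qed.

Lemma funk_Xi :
  ev PE z ^ 2 - sum2 (fun j => yc j z * pd_expr PE z j)
  = 3 * (phiF z / (2 * FF z)) ^ 2 - psiF z / (2 * FF z) - alphaF z ^ 2.
Proof. rewrite sum_y_pd_expr_x, PE_Xi, FF_ev, alphaF_ev by auto; reflexivity. Qed.

Lemma funk_T k :
  (k < 2)%nat ->
  2 * pd_expr PE z k - sum2 (fun j => yc j z * pd2_expr PE z (2 + k) j)
  - ev PE z * pd_expr PE z (2 + k)
  = alphaF z * pd (2 + k) alphaF z
    - (3 * (phiF z / (2 * FF z)) ^ 2 - psiF z / (2 * FF z)) * pd (2 + k) FF z / FF z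
    + tauF k z.
Proof.
  intro Hk.
  transitivity
    (xc k z * (4 * ev (deriv PE Nx) z - y_dot_dx (deriv PE Nxy) z
               - ev PE z * ev (deriv PE Nxy) z)
     + yc k z * (ev (deriv PE Nxy) z - 2 * y_dot_dx (deriv PE Ny) z
                 - 2 * ev PE z * ev (deriv PE Ny) z)).
  - rewrite (pd_expr_x PE z k), sum_y_pd2_expr_x, (pd_expr_y PE z k) by auto; ring.
  - pose proof rK2_bounds; pose proof (FE_pos z Hz); pose proof Hz as [Hn Hm].
    rewrite PE_T_dx, PE_T_dy, pd_alphaF, pd_FF, (pd_expr_y alphaE z k), (pd_expr_y FE z k), !FF_ev,
      alphaF_ev by auto.
    unfold tauF; rewrite FF_ev; field; repeat split; lra.
Qed.

Lemma alphaF_euler : sum2 (fun k => yc k z * pd (2 + k) alphaF z) = alphaF z.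
Proof.
  transitivity (sum2 (fun k => yc k z * pd_expr alphaE z (2 + k))).
  - unfold sum2; rewrite !pd_alphaF by auto; reflexivity.
  - rewrite sum_y_pd_expr_y, alphaE_euler, alphaF_ev by auto; reflexivity.
Qed.

Lemma FF_euler : sum2 (fun k => yc k z * pd (2 + k) FF z) = FF z.
Proof.
  transitivity (sum2 (fun k => yc k z * pd_expr FE z (2 + k))).
  - unfold sum2; rewrite !pd_FF by auto; reflexivity.
  - rewrite sum_y_pd_expr_y, FE_euler, FF_ev by auto; reflexivity.
Qed.

Lemma tauF_y : sum2 (fun k => tauF k z * yc k z) = 0.
Proof.
  pose proof rK2_bounds; pose proof (FE_pos z Hz); pose proof Hz as [Hn Hm].
  unfold sum2, tauF, ny2, xy, xc, yc; rewrite FF_ev; field; repeat split; lra.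
Qed.

Lemma Riem_funk i k :
  (i < 2)%nat -> (k < 2)%nat ->
  Riem i k z =
    - (delta i k * alphaF z ^ 2 - alphaF z * pd (2 + k) alphaF z * yc i z)
    + (3 * (phiF z / (2 * FF z)) ^ 2 - psiF z / (2 * FF z))
      * (delta i k - pd (2 + k) FF z / FF z * yc i z)
    + tauF k z * yc i z.
Proof.
  intros Hi Hk; rewrite Riem_funk_projective, funk_Xi, funk_T by auto; unfold Rdiv; ring.
Qed.

Lemma Ric_funk :
  Ric z = 3 * (phiF z / (2 * FF z)) ^ 2 - psiF z / (2 * FF z) - alphaF z ^ 2.
Proof.
  pose proof (FE_pos z Hz); pose proof alphaF_euler as Ealpha; pose proof FF_euler as EF;
    pose proof tauF_y as Etau.
  unfold Ric, sum2 in *; rewrite !Riem_funk by lia; cbv [delta Nat.eqb]; rewrite FF_ev in *.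
  apply Rminus_diag_uniq.
  transitivity
    (alphaF z * (yc 0 z * pd (2 + 0) alphaF z + yc 1 z * pd (2 + 1) alphaF z - alphaF z)
     - (3 * (phiF z / (2 * ev FE z)) ^ 2 - psiF z / (2 * ev FE z)) / ev FE z
       * (yc 0 z * pd (2 + 0) FF z + yc 1 z * pd (2 + 1) FF z - ev FE z)
     + (tauF 0 z * yc 0 z + tauF 1 z * yc 1 z)).
  - field; lra.
  - rewrite Ealpha, EF, Etau; ring.
Qed.

End FunkCurvature.

Theorem theorem4p2 : forall z : pt,
  nx2 z < rK ^ 2 ->
  (yc 0 z <> 0 \/ yc 1 z <> 0) ->
  (forall i k : nat, (i < 2)%nat -> (k < 2)%nat ->
     Riem i k z =
       - (delta i k * alphaF z ^ 2 - alphaF z * pd (2 + k) alphaF z * yc i z)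
       + (3 * (phiF z / (2 * FF z)) ^ 2 - psiF z / (2 * FF z))
         * (delta i k - pd (2 + k) FF z / FF z * yc i z)
       + tauF k z * yc i z) /\
  Ric z = flagK z * FF z ^ 2 /\
  flagK z * FF z ^ 2 =
    3 * (phiF z / (2 * FF z)) ^ 2 - psiF z / (2 * FF z) - alphaF z ^ 2.
Proof.
  intros z Hn Hy.
  assert (Hz : funk_domain z).
  { split; [exact Hn|]; unfold ny2.
    destruct Hy as [Hy|Hy]; pose proof (pow2_gt_0 _ Hy); pose proof (pow2_ge_0 (yc 0 z));
      pose proof (pow2_ge_0 (yc 1 z)); lra. }
  assert (HF : FF z <> 0) by (rewrite FF_ev; apply Rgt_not_eq, FE_pos, Hz).
  split; [intros; apply Riem_funk; auto|].
  unfold flagK; split; [field; exact HF|].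
  rewrite Ric_funk by exact Hz; field; exact HF.
Qed.
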